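(* For every $j\in\{1,\dots,N\}$ with $S_j\neq\emptyset$, let $V^{(j),\rm opt}$ be the optimal value of (P1) with pairs restricted to $\mathcal M^{\rm narrow}$ and metric $p$ replaced by $p_1^{(j)}$. Then $p_2^{(j-1)}(U_j^*,c_j^* )\ge V^{(j),\rm opt}/(T+1+\Delta+2J)$.
   Context: Setup as for problem (P1): users $\{1,\dots,K\}$ partitioned into groups $\mathcal G_1,\dots,\mathcal G_L$; $N$ RBs; chunks are vectors $c\in\{0,1\}^N$ whose ones form a nonempty contiguous block, ${\rm Tail}(c)$ the last index of $c$, chunks intersect if they share an index; $\mathcal U$ = nonempty $U\subseteq\{1,\dots,K\}$ with $|U|\le T$, $|U\cap\mathcal G_s|\le1\ \forall s$; pairs are elements of $\mathcal U\times\mathcal C$. Metrics $p\ge0$; weights $\beta^q\in[0,1]$ ($q=1,\dots,J$); binary weights $\alpha^q\in\{0,1\}$ ($q\in\mathcal I$) with $\sum_{q\in\mathcal I}\alpha^q(U,c)\le\Delta$ per pair. A set $F$ of pairs is feasible if each group meets $U$ for at most one element of $F$, each RB lies in $c$ for at most one element, $\sum_F\beta^q\le1$ ($q\le J$) and $\sum_F\alpha^q\le1$ ($q\in\mathcal I$); (P1) maximizes the sum of the metric over feasible $F$. Pairs $(U,c),(U',c')$ conflict if some group meets both $U,U'$, or $c,c'$ intersect, or some $q\in\mathcal I$ has $\alpha^q(U,c)=\alpha^q(U',c')=1$. $\mathcal M^{\rm narrow}$ = pairs with $\beta^q\le1/2$ for all $q\le J$; $\max_q\beta^q:=0$ if $J=0$;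 $(x)^+=\max\{x,0\}$. Recursion: $p_2^{(0)}=p$ on $\mathcal M^{\rm narrow}$. For $j=1,\dots,N$: let $(U_j^*,c_j^* )$ maximize $p_2^{(j-1)}$ over pairs of $\mathcal M^{\rm narrow}$ with ${\rm Tail}(c)=j$; $S_j=(U_j^*,c_j^* )$ if $p_2^{(j-1)}(U_j^*,c_j^* )>0$, else $S_j=\emptyset$. For $(U,c)\in\mathcal M^{\rm narrow}$, $p_1^{(j)}(U,c)=(p_2^{(j-1)}(U_j^*,c_j^* ))^+\mathbf 1[p_2^{(j-1)}(U,c)>0]$ if $(U,c)$ conflicts with $(U_j^*,c_j^* )$, and $p_1^{(j)}(U,c)=2(p_2^{(j-1)}(U_j^*,c_j^* ))^+\mathbf 1[p_2^{(j-1)}(U,c)>0]\max_{q\le J}\beta^q(U,c)$ otherwise; $p_2^{(j)}=p_2^{(j-1)}-p_1^{(j)}$. *)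

From HB Require Import structures.
From mathcomp Require Import all_boot all_order all_algebra.
Set Implicit Arguments. Unset Strict Implicit. Unset Printing Implicit Defensive.
Import Order.TTheory GRing.Theory Num.Theory.
Local Open Scope ring_scope.

Section Sched.
Variables (R : realFieldType) (K L N T J Delta : nat) (I : finType).
(* grp u = index of the group G_s containing user u *)
Variable grp : 'I_K -> 'I_L.

(* A chunk is given by its first and last RB (0-based ordinals), first <= last. *)
Definition chunk := ('I_N * 'I_N)%type.
Definition pair := ({set 'I_K} * chunk)%type.

Definition chunk_ok (c : chunk) : bool := (c.1 <= c.2)%N.
Definition in_chunk (i : 'I_N) (c : chunk) : bool := (c.1 <= i)%N && (i <= c.2)%N.
(* Tail, 1-based as in the paper *)
Definition tail (c : chunk) : nat := (c.2 : nat).+1.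
Definition chunks_intersect (c c' : chunk) : bool :=
  [exists i : 'I_N, in_chunk i c && in_chunk i c'].
Definition meets (s : 'I_L) (U : {set 'I_K}) : bool := [exists u in U, grp u == s].

Definition users_ok (U : {set 'I_K}) : bool :=
  [&& U != set0, (#|U| <= T)%N & [forall s : 'I_L, (#|[set u in U | grp u == s]| <= 1)%N]].

Definition pair_ok (x : pair) : bool := users_ok x.1 && chunk_ok x.2.

Variables (beta : 'I_J -> pair -> R) (alpha : I -> pair -> bool).

Definition narrow (x : pair) : bool := pair_ok x && [forall q, beta q x <= 2^-1].

Definition maxbeta (x : pair) : R := \big[Num.max/0]_(q < J) beta q x.

Definition conflict (x y : pair) : bool :=
  [|| [exists s : 'I_L, meets s x.1 && meets s y.1],
      chunks_intersect x.2 y.2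
    | [exists q : I, alpha q x && alpha q y]].

Definition feasible_narrow (F : {set pair}) : bool :=
  [&& [forall x in F, narrow x],
      [forall s : 'I_L, (#|[set x in F | meets s x.1]| <= 1)%N],
      [forall i : 'I_N, (#|[set x in F | in_chunk i x.2]| <= 1)%N],
      [forall q : 'I_J, \sum_(x in F) beta q x <= 1]
    & [forall q : I, (\sum_(x in F) (alpha q x : nat) <= 1)%N]].

Definition Vopt (m : pair -> R) : R :=
  \big[Num.max/0]_(F : {set pair} | feasible_narrow F) \sum_(x in F) m x.

Definition posp (r : R) : R := Num.max r 0.

(* one step of the recursion; [s] is the selected maximizer the pair chosen at step j,
   None if there is no narrow pair with tail j *)
Definition p1_step (prev : pair -> R) (s : option pair) (x : pair) : R :=
  match s with
  | None => 0
  | Some y =>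
      if 0 < prev x then
        (if conflict x y then posp (prev y) else 2 * posp (prev y) * maxbeta x)
      else 0
  end.

Variable p : pair -> R.

Fixpoint p2 (sel : nat -> option pair) (j : nat) : pair -> R :=
  match j with
  | 0 => p
  | j'.+1 => fun x => p2 sel j' x - p1_step (p2 sel j') (sel j'.+1) x
  end.

Definition p1 (sel : nat -> option pair) (j : nat) : pair -> R :=
  p1_step (p2 sel j.-1) (sel j).

Definition is_selection (sel : nat -> option pair) : Prop :=
  forall j, (1 <= j <= N)%N ->
    match sel j with
    | None => forall x, narrow x -> tail x.2 != j
    | Some y => [/\ narrow y, tail y.2 = j &
                   forall x, narrow x -> tail x.2 = j -> p2 sel j.-1 x <= p2 sel j.-1 y]
    end.

End Sched.

From HB Require Import structures.
From mathcomp Require Import all_boot all_order all_algebra.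
From mathcomp Require Import zify.
Import Order.TTheory GRing.Theory Num.Theory.
Local Open Scope ring_scope.

(* Write v = p2^{(j-1)}(y) > 0 for the pair y selected at step j, and let F be
   a feasible set of narrow pairs.  By definition of p1^{(j)}, each x in F
   contributes at most v if it is still alive (p2^{(j-1)}(x) > 0) and
   conflicts with y, and at most 2 v max_q beta^q(x) <= 2 v sum_q beta^q(x)
   otherwise.  Feasibility gives sum_{x in F} beta^q(x) <= 1 for each q,
   hence at most 2 v J for the second kind.  For the first kind, a live pair
   that conflicts with y shares with it a group (at most T of them, one
   pair of F each), the RB Tail(c_y) (a live pair of F ends at or after it,
   so chunk overlap forces this RB; one pair of F), or a binary weight
   alpha^q (at most Delta of them, one pair of F each).  The key fact for
   the chunk case is that p2 kills every narrow pair by the step equal to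
   its tail.  Summing, every feasible value of p1^{(j)} is at most
   v (T + 1 + Delta + 2J), which bounds V^{(j),opt}. *)

Lemma sum_indicator (X : finType) (A : {set X}) (b : pred X) :
  (\sum_(x in A) (b x : nat) = #|[set x in A | b x]|)%N.
Proof.
rewrite (eq_bigr (fun x => if b x then 1%N else 0%N)); last by move=> x _; case: (b x).
by rewrite -big_mkcondr sum1_card cardsE.
Qed.

Lemma shared_resources (Q X : finType) (F : {set X}) (r : Q -> pred X) (y : X) :
  (forall q, r q y -> (#|[set x in F | r q x]| <= 1)%N) ->
  (\sum_(x in F) \sum_q (r q x && r q y : nat) <= \sum_q (r q y : nat))%N.
Proof.
move=> excl; rewrite exchange_big /=; apply: leq_sum => q _.
case: (boolP (r q y)) => [rqy | _]; last by rewrite big1 // => x _; rewrite andbF.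
by under eq_bigr do rewrite andbT; rewrite sum_indicator; exact: excl.
Qed.

Lemma bigmax_le_sum (R : realDomainType) (n : nat) (f : 'I_n -> R) :
  (forall i, 0 <= f i) -> \big[Num.max/0]_(i < n) f i <= \sum_(i < n) f i.
Proof.
move=> f_ge0; have sum_ge0 : 0 <= \sum_i f i by exact: sumr_ge0.
apply: bigmax_le => // i _.
by rewrite (bigD1 i) //= lerDl; apply: sumr_ge0.
Qed.

Section Recursion.
Variables (R : realFieldType) (K L N T J Delta : nat) (I : finType)
  (grp : 'I_K -> 'I_L) (beta : 'I_J -> pair K N -> R) (alpha : I -> pair K N -> bool)
  (p : pair K N -> R) (sel : nat -> option (pair K N)).
Hypothesis hbeta : forall q x, pair_ok T grp x -> 0 <= beta q x <= 1.
Hypothesis halpha : forall x, pair_ok T grp x -> (\sum_(q : I) (alpha q x : nat) <= Delta)%N.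
Hypothesis hsel : is_selection T grp beta alpha p sel.

Local Notation P := (p2 grp beta alpha p sel).
Local Notation narrowp := (narrow T grp beta).

Lemma narrow_pair_ok {x} : narrowp x -> pair_ok T grp x.
Proof. by case/andP. Qed.

Lemma sum_beta_ge0 {x} : pair_ok T grp x -> 0 <= \sum_q beta q x.
Proof. by move=> ok; apply: sumr_ge0 => q _; case/andP: (hbeta q x ok). Qed.

Lemma maxbeta_le_sum {x} : pair_ok T grp x -> maxbeta beta x <= \sum_q beta q x.
Proof. by move=> ok; apply: bigmax_le_sum => q; case/andP: (hbeta q x ok). Qed.

Lemma same_tail_intersect (c c' : chunk N) :
  chunk_ok c -> chunk_ok c' -> tail c = tail c' -> chunks_intersect c c'.
Proof.
rewrite /chunk_ok /tail => ok ok' [e]; apply/existsP; exists c.2.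
by rewrite /in_chunk ok leqnn e ok' leqnn.
Qed.

Lemma p2_nonpos_step k x : P k x <= 0 -> P k.+1 x <= 0.
Proof.
move=> le0 /=; rewrite /p1_step; case: (sel k.+1) => [y|]; last by rewrite subr0.
by rewrite ltNge le0 /= subr0.
Qed.

(* At step Tail(x) a live narrow pair x conflicts with the selected maximizer
   (same tail), so it loses at least its whole positive value. *)
Lemma p2_killed_at_tail {x} : narrowp x -> P (tail x.2) x <= 0.
Proof.
move=> nx; have range : (1 <= tail x.2 <= N)%N by rewrite /tail ltn_ord.
move: (hsel _ range) => /=; rewrite /p1_step.
case: (sel (tail x.2)) => [y [ny ty ymax]|]; last by move=> /(_ x nx); rewrite eqxx.
case: ifP => [alive|]; last by rewrite subr0 => /negbT; rewrite -leNgt.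
have cxy : conflict grp alpha x y.
  apply/or3P; apply: Or32; apply: same_tail_intersect => //.
  - by case/andP: (narrow_pair_ok nx).
  - by case/andP: (narrow_pair_ok ny).
by rewrite cxy subr_le0 le_max ymax.
Qed.

Lemma p2_dead_after_tail {x k} : narrowp x -> (tail x.2 <= k)%N -> P k x <= 0.
Proof.
move=> nx; elim: k => [|k IH]; first by rewrite /tail.
rewrite leq_eqVlt => /orP[/eqP <-|]; first exact: p2_killed_at_tail.
by move=> lt; apply: p2_nonpos_step; apply: IH.
Qed.

Variables (j : nat) (y : pair K N).
Hypotheses (hj : (1 <= j <= N)%N) (hy : sel j = Some y) (hS : 0 < P j.-1 y).

Lemma selected_narrow : narrowp y.
Proof. by move: (hsel _ hj); rewrite hy => -[]. Qed.

Lemma selected_last_rb : (y.2.2 : nat) = j.-1.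
Proof. by move: (hsel _ hj); rewrite hy => -[_ ty _]; move: ty; rewrite /tail => <-. Qed.

Definition live_conflict (x : pair K N) : nat :=
  ((0 < P j.-1 x) && conflict grp alpha x y : nat).

Definition shared_groups (x : pair K N) : nat :=
  (\sum_s (meets grp s x.1 && meets grp s y.1 : nat))%N.

Definition shared_weights (x : pair K N) : nat :=
  (\sum_q (alpha q x && alpha q y : nat))%N.

Lemma live_conflict_cover x : narrowp x ->
  (live_conflict x <= shared_groups x + in_chunk y.2.2 x.2 + shared_weights x)%N.
Proof.
move=> nx; rewrite /live_conflict.
case: (boolP (0 < P j.-1 x)) => //= alive.
case hc: (conflict grp alpha x y) => //; move: hc.
case/or3P => [/existsP[s hs]|/existsP[i hi]|/existsP[q hq]].
- rewrite -addnA; apply: leq_trans (leq_addr _ _).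
  by rewrite /shared_groups (bigD1 s) //= hs.
- have ends_late : (j.-1 < tail x.2)%N.
    rewrite ltnNge; apply/negP => le.
    by move: (p2_dead_after_tail nx le); rewrite leNgt alive.
  case/andP: hi => /andP[ix1 ix2] /andP[iy1 iy2].
  have -> : in_chunk y.2.2 x.2.
    by rewrite /in_chunk (leq_trans ix1 iy2) selected_last_rb -ltnS.
  by rewrite /=; lia.
- by rewrite /shared_weights (bigD1 q) //= hq /=; lia.
Qed.

Lemma selected_groups_le : (\sum_s (meets grp s y.1 : nat) <= T)%N.
Proof.
have /andP[/and3P[_ size_y _] _] := narrow_pair_ok selected_narrow.
rewrite (eq_bigr (fun s => (s \in grp @: y.1 : nat))); last first.
  move=> s _; congr nat_of_bool; apply/existsP/imsetP.
  - by case=> u /andP[uy /eqP <-]; exists u.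
  - by case=> u uy ->; exists u; rewrite uy eqxx.
by rewrite -big_mkcond sum1_card /= (leq_trans (leq_imset_card _ _)).
Qed.

Lemma live_conflict_count {F} : feasible_narrow T grp beta alpha F ->
  (\sum_(x in F) live_conflict x <= T + 1 + Delta)%N.
Proof.
case/and5P => F_narrow F_groups F_rbs _ F_weights.
have narrowF x : x \in F -> narrowp x by move=> xF; move: (forallP F_narrow x); rewrite xF.
apply: leq_trans (_ : \sum_(x in F)
    (shared_groups x + in_chunk y.2.2 x.2 + shared_weights x) <= _)%N.
  by apply: leq_sum => x /narrowF; exact: live_conflict_cover.
rewrite !big_split /=; apply: leq_add; first apply: leq_add.
- apply: (leq_trans _ selected_groups_le).
  by apply: shared_resources => s _; exact: (forallP F_groups s).
- by rewrite sum_indicator; exact: (forallP F_rbs y.2.2).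
- apply: (leq_trans _ (halpha y (narrow_pair_ok selected_narrow))).
  by apply: shared_resources => q _; rewrite -sum_indicator; exact: (forallP F_weights q).
Qed.

Lemma p1_pointwise x : narrowp x ->
  p1 grp beta alpha p sel j x <=
    P j.-1 y * (live_conflict x)%:R + 2 * P j.-1 y * \sum_q beta q x.
Proof.
move=> nx; have v_ge0 := ltW hS.
have sb_ge0 := sum_beta_ge0 (narrow_pair_ok nx).
have pos_v : posp (P j.-1 y) = P j.-1 y by apply/max_idPl.
rewrite /p1 hy /p1_step /live_conflict pos_v.
case: ifP => alive /=; last by rewrite mulr0 add0r mulr_ge0 ?mulr_ge0.
case: ifP => cxy /=; first by rewrite mulr1 lerDl mulr_ge0 ?mulr_ge0.
rewrite mulr0 add0r; apply: ler_wpM2l; first by rewrite mulr_ge0.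
exact: maxbeta_le_sum (narrow_pair_ok nx).
Qed.

Lemma feasible_value_bound {F} : feasible_narrow T grp beta alpha F ->
  \sum_(x in F) p1 grp beta alpha p sel j x <= P j.-1 y * (T + 1 + Delta + 2 * J)%:R.
Proof.
move=> hF; have count := live_conflict_count hF.
case/and5P: hF => F_narrow _ _ F_beta _.
have v_ge0 := ltW hS.
apply: le_trans (_ : \sum_(x in F) (P j.-1 y * (live_conflict x)%:R
    + 2 * P j.-1 y * \sum_q beta q x) <= _).
  apply: ler_sum => x xF; apply: p1_pointwise.
  by move: (forallP F_narrow x); rewrite xF.
have beta_total : \sum_q \sum_(x in F) beta q x <= J%:R.
  apply: le_trans (_ : \sum_(q < J) (1 : R) <= _); last by rewrite sumr_const card_ord.
  by apply: ler_sum => q _; exact: (forallP F_beta q).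
rewrite big_split /= -!mulr_sumr -natr_sum exchange_big /=.
rewrite natrD natrM mulrDr -mulrA; apply: lerD; first by rewrite ler_wpM2l ?ler_nat.
by rewrite [2%:R * _]mulrC -mulrA ler_wpM2l // mulrC ler_wpM2l.
Qed.

End Recursion.

Theorem lemma2 (R : realFieldType) (K L N T J Delta : nat) (I : finType)
  (grp : 'I_K -> 'I_L) (beta : 'I_J -> pair K N -> R) (alpha : I -> pair K N -> bool)
  (p : pair K N -> R)
  (hp : forall x, pair_ok T grp x -> 0 <= p x)
  (hbeta : forall q x, pair_ok T grp x -> 0 <= beta q x <= 1)
  (halpha : forall x, pair_ok T grp x -> (\sum_(q : I) (alpha q x : nat) <= Delta)%N)
  (sel : nat -> option (pair K N))
  (hsel : is_selection T grp beta alpha p sel)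
  (j : nat) (hj : (1 <= j <= N)%N) (y : pair K N)
  (hy : sel j = Some y) (hS : 0 < p2 grp beta alpha p sel j.-1 y) :
  Vopt T grp beta alpha (p1 grp beta alpha p sel j) / (T + 1 + Delta + 2 * J)%:R
    <= p2 grp beta alpha p sel j.-1 y.
Proof.
have denom_pos : (0 < (T + 1 + Delta + 2 * J)%:R :> R) by rewrite ltr0n; lia.
rewrite ler_pdivrMr // /Vopt; apply: bigmax_le; first by rewrite mulr_ge0 // ltW.
move=> F; exact: (@feasible_value_bound R K L N T J Delta I grp beta alpha p sel
  hbeta halpha hsel j y hj hy hS F).
Qed.
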